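(* Fix $R>0$ and an integer $k\ge2$. There exist a sequence $(\mathbb{X}_n,d_n,\nu_n)_{n\in\mathbb{N}}$ of complete separable metric spaces with locally finite Borel measures satisfying Assumption (A), pure $k$-body repulsive symmetric potentials $\phi^{(n)}$ on $\mathbb{X}_n$ of range at most $R$, bounded measurable sets $\Lambda_n\subseteq\mathbb{X}_n$, and reals $\lambda_n>0$, such that (1) $B_R^{(n)}:=\sup_{x\in\mathbb{X}_n}\nu_n(\{y\in\mathbb{X}_n: d_n(x,y)\le R\})$ satisfies $B_R^{(n)}\to\infty$ as $n\to\infty$; (2) $\lambda_n=O\!\left(\frac{\log B_R^{(n)}}{B_R^{(n)}}\right)$; and (3) $Z_{\Lambda_n,\phi^{(n)}}(-\lambda_n)=0$ for every $n$.
   Context: Assumption (A) on $(\mathbb{X},d,\nu)$: for every $x\in\mathbb{X}$, the push-forward of $\nu$ under $y\mapsto d(x,y)$ is absolutely continuous with respect to Lebesgue measure on $\mathbb{R}$. A potential $\phi=(\phi_m)_{m\in\mathbb{N}}$ is a family of measurable $\phi_m:\mathbb{X}^m\to\mathbb{R}\cup\{\infty\}$, written $\phi(\mathbf{x})=\phi_m(\mathbf{x})$; symmetric: invariant under coordinate permutations; repulsive: $\phi_m\ge0$; range at most $R$: $\phi(\mathbf{x})=0$ whenever $\max_{i,j}d(x_i,x_j)>R$; pure $k$-body: $\phi_m=0$ for all $m\ne k$. For $\mathbf{x}\in\mathbb{X}^m$, $S\subseteq[m]$, $\mathbf{x}_S=(x_i)_{i\in S}$; $H(\mathbf{x})=\sum_{\emptyset\ne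 S\subseteq[m]}\phi(\mathbf{x}_S)$; $Z_{\Lambda,\phi}(\lambda)=\sum_{m\ge0}\frac{\lambda^m}{m!}\int_{\Lambda^m}e^{-H(\mathbf{x})}\nu^m(d\mathbf{x})$ with $e^{-\infty}=0$. *)

From HB Require Import structures.
From mathcomp Require Import all_boot all_order all_algebra.
From mathcomp Require Import all_classical all_reals all_analysis.
From mathcomp Require Import measurable_realfun.

Set Implicit Arguments.
Unset Strict Implicit.
Unset Printing Implicit Defensive.

Import Order.TTheory GRing.Theory Num.Theory.
Import numFieldNormedType.Exports.
Local Open Scope classical_set_scope.
Local Open Scope ring_scope.

Section MetricMeasure.
Variable R : realType.

Section Metric.
Variables (T : Type) (d : T -> T -> R).

Definition is_metric : Prop :=
  [/\ forall x y, 0 <= d x y,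
      forall x y, d x y = 0 <-> x = y,
      forall x y, d x y = d y x &
      forall x y z, d x z <= d x y + d y z].

Definition dball (x : T) (r : R) : set T := [set y | d x y < r].
Definition dcball (x : T) (r : R) : set T := [set y | d x y <= r].

Definition dopen : set (set T) :=
  [set U | forall x, U x -> exists2 r, 0 < r & dball x r `<=` U].

Definition metric_complete : Prop :=
  forall u : nat -> T,
    (forall e, 0 < e -> exists N, forall p q, (N <= p)%N -> (N <= q)%N ->
        d (u p) (u q) < e) ->
    exists x, forall e, 0 < e -> exists N, forall n, (N <= n)%N -> d (u n) x < e.

Definition metric_separable : Prop :=
  exists D : set T, countable D /\
    forall x e, 0 < e -> exists2 y, D y & d x y < e.

Definition dbounded (A : set T) : Prop :=
  exists x r, A `<=` dball x r.

End Metric.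

Notation borel_of d := (g_sigma_algebraType (dopen d)).

(* product sigma-algebra on m-tuples: generated by measurable rectangles *)
Definition tuple_rect (dX : measure_display) (X : measurableType dX) (m : nat)
  : set (set (m.-tuple X)) :=
  [set A | exists B : 'I_m -> set X, (forall i, measurable (B i)) /\
             A = [set t | forall i, B i (tnth t i)]].

Section OnSpace.
Variables (T : pointedType) (d : T -> T -> R).
Variable nu : {measure set (borel_of d) -> \bar R}.

Definition locally_finite : Prop :=
  forall x : T, exists2 r, 0 < r & (nu (dball d x r) < +oo)%E.

(* Assumption (A): push-forward of nu under y |-> d(x,y) is absolutely
   continuous w.r.t. Lebesgue measure on (the Borel sets of) R *)
Definition assumptionA : Prop :=
  forall (x : T) (A : set (measurableTypeR R)),
    measurable A -> lebesgue_measure A = 0%E ->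
    nu [set y : borel_of d | A (d x y)] = 0%E.

(* A potential is given as a function on finite configurations
   (seq T), phi_m being its restriction to sequences of size m. *)
Definition potential_measurable (phi : seq T -> \bar R) : Prop :=
  forall (m : nat) (E : set (\bar R)), measurable E ->
    <<s @tuple_rect _ (borel_of d) m >> [set t : m.-tuple (borel_of d) | E (phi t)].

Definition potential_symmetric (phi : seq T -> \bar R) : Prop :=
  forall s s' : seq T, perm_eq s s' -> phi s = phi s'.

Definition potential_repulsive (phi : seq T -> \bar R) : Prop :=
  forall s, (0 <= phi s)%E.

Definition potential_range_le (Rr : R) (phi : seq T -> \bar R) : Prop :=
  forall s, (exists x y, [/\ x \in s, y \in s & Rr < d x y]) -> phi s = 0%E.

Definition potential_pure (k : nat) (phi : seq T -> \bar R) : Prop :=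
  forall s, size s != k -> phi s = 0%E.

Definition hamiltonian (phi : seq T -> \bar R) (s : seq T) : \bar R :=
  (\sum_(b : (size s).-tuple bool | has id b) phi (mask b s))%E.

(* iterated integral over L^m:  int_L ... int_L f(x_1,...,x_m) dnu ... dnu
   (equal to the integral against nu^m on L^m by Tonelli, f >= 0) *)
Fixpoint iter_integral (L : set T) (m : nat) (f : seq T -> \bar R) : \bar R :=
  match m with
  | 0%N => f [::]
  | m'.+1 => (\int[nu]_(x in (L : set (borel_of d)))
                 iter_integral L m' (fun s => f (x :: s)))%E
  end.

Definition Z_coeff (phi : seq T -> \bar R) (L : set T) (m : nat) : \bar R :=
  iter_integral L m (fun s => expeR (- hamiltonian phi s)).

Definition partition_function_zero (phi : seq T -> \bar R) (L : set T) (z : R)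
  : Prop :=
  (forall m, Z_coeff phi L m \is a fin_num) /\
  ((fun N => \sum_(m < N) z ^+ m / (m`!)%:R * fine (Z_coeff phi L m))
     @ \oo --> (0 : R)).

Definition ball_volume_sup (Rr : R) : \bar R :=
  ereal_sup (range (fun x : T => nu (dcball d x Rr))).

End OnSpace.
End MetricMeasure.

Notation borel_of d := (g_sigma_algebraType (dopen d)).

From HB Require Import structures.
From mathcomp Require Import all_boot all_order all_algebra.
From mathcomp Require Import all_classical all_reals all_analysis.
From mathcomp Require Import measurable_realfun polyrcf.
From mathcomp Require Import ring lra zify.

(* The spaces are the real line with [n.+1] times Lebesgue measure, and all the
   mass that matters sits in two adjacent cells A = ]-R/2, 0[ and B = ]0, R/2[,
   each of measure a_n = (n+1) R/2, while B_R = 4 a_n.  Colour A by 0 and B by 1;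
   the pure k-body potential is +oo on every k-tuple of points of A u B, except
   (for odd k) on those with exactly one point in B, and 0 otherwise.  It has
   range < R because A u B has diameter R.  On (A u B)^m the Boltzmann factor is
   then 1 for m < k and 0 for m > k (some k-subtuple is forbidden), so
   Z(-t/a_n) = \sum_(i < k) (-2t)^i/i! - [odd k] t^k/(k-1)! is a polynomial in t
   independent of n.  It equals 1 at 0 and has a negative leading coefficient,
   hence a positive root t0, and lam_n = t0/a_n = 4 t0/B_R = O(log B_R/B_R). *)

Set Implicit Arguments.
Unset Strict Implicit.
Unset Printing Implicit Defensive.

Import Order.TTheory GRing.Theory Num.Theory.
Import numFieldNormedType.Exports.
Local Open Scope classical_set_scope.
Local Open Scope ring_scope.

Section lebesgue_measure_invariance.
Context {R : realType}.
Local Open Scope ereal_scope.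
Local Notation mu := (@lebesgue_measure R).

Lemma lebesgue_measure_shift (c : R) (A : set R) : measurable A ->
  mu [set y | A (y + c)%R] = mu A.
Proof.
move=> mA; change (pushforward mu ((+%R^~ c) : _ -> measurableTypeR R) A = mu A).
apply/esym/lebesgue_measure_unique => //.
  by apply: measurable_funD => //; exact: measurable_cst.
move=> mS _ [[a b]] _ <-; rewrite /= /pushforward.
have -> : (+%R^~ c) @^-1` `]a, b]%classic = `](a - c)%R, (b - c)%R]%classic.
  by apply/seteqP; split => y; rewrite /= !in_itv /= lerBrDr ltrBlDr.
rewrite !lebesgue_measure_itv /= !lte_fin ltrD2r; case: ifP => // _.
by rewrite -!EFinB; congr EFin; lra.
Qed.

Lemma lebesgue_measure_dist_null (x : R) (A : set R) : measurable A ->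
  mu A = 0 -> mu [set y | A `|x - y|%R] = 0.
Proof.
move=> mA A0.
have mshift (c : R) : measurable_fun [set: R] (fun y : R => y + c)%R.
  by apply: measurable_funD => //; exact: measurable_cst.
pose Ax := [set z : R | A (z + x)%R].
have mAx : measurable Ax by rewrite -[X in measurable X]setTI; exact: mshift.
have mneg : measurable [set y : R | Ax (- y)%R].
  by rewrite -[X in measurable X]setTI; apply: oppr_measurable.
have mpos : measurable [set y : R | A (y + - x)%R].
  by rewrite -[X in measurable X]setTI; exact: mshift.
have mdist : measurable [set y : R | A `|x - y|%R].
  rewrite -[X in measurable X]setTI; apply: measurableT_comp => //.
  by apply: measurable_funB => //; exact: measurable_cst.
have neg0 : mu [set y : R | Ax (- y)%R] = 0.
  by have := lebesgue_measureN mAx; rewrite /pushforward => ->; rewrite lebesgue_measure_shift.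
have pos0 : mu [set y : R | A (y + - x)%R] = 0 by rewrite lebesgue_measure_shift.
have sub : [set y | A `|x - y|%R] `<=` [set y | Ax (- y)%R] `|` [set y | A (y + - x)%R].
  move=> y /=; have [xy|xy] := leP 0%R (x - y)%R.
    by rewrite ger0_norm// addrC; left.
  by rewrite ltr0_norm// opprB; right.
apply/eqP; rewrite eq_le measure_ge0 andbT.
have h1 : mu [set y | A `|x - y|%R]
    <= mu ([set y | Ax (- y)%R] `|` [set y | A (y + - x)%R]).
  by apply: le_measure => //; rewrite inE//; exact: measurableU.
apply: (le_trans h1); apply: (le_trans (measureU2 _ _ _)) => //.
by rewrite [X in X + _]neg0 [X in _ + X]pos0 adde0.
Qed.

End lebesgue_measure_invariance.

Section real_line.
Context {R : realType}.

Definition dR (x y : R) : R := `|x - y|.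

Lemma dR_metric : is_metric dR.
Proof.
split=> [x y|x y|x y|x y z]; rewrite /dR.
- exact: normr_ge0.
- by split=> [/eqP|->]; rewrite ?subrr ?normr0 // normr_eq0 subr_eq0 => /eqP.
- exact: distrC.
- by rewrite -[x - z](subrKA y); exact: ler_normD.
Qed.

Lemma dR_complete : metric_complete dR.
Proof.
move=> u u_cauchy.
have cu : cvg (u @ \oo).
  apply/cauchy_cvgP/cauchy_ballP => e e0; have [N HN] := u_cauchy e e0.
  rewrite near_map2; exists ([set n | (N <= n)%N], [set n | (N <= n)%N]) => /=.
    by split; exists N.
  by case=> p q [/= hp hq]; rewrite -ball_normE /=; exact: HN.
exists (lim (u @ \oo)) => e e0.
move/cvgrPdist_lt : cu => /(_ e e0) [N _ HN].
by exists N => n hn; rewrite /dR distrC; exact: HN.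
Qed.

Lemma dR_separable : metric_separable dR.
Proof.
exists (range (@ratr R)); split.
  exact: (card_le_trans (card_image_le _ _) (countableP _)).
move=> x e e0; have [q] := @rat_in_itvoo R (x - e) (x + e) ltac:(lra).
rewrite in_itv /= => /andP[xq qx]; exists (ratr q); first by exists q.
by rewrite /dR ltr_norml; apply/andP; split; lra.
Qed.

Lemma dopen_dR_open (U : set R) : dopen dR U -> open U.
Proof.
move=> dU; rewrite openE => x Ux; have [r r0 sub] := dU x Ux.
apply/nbhs_ballP; exists r => //= y; rewrite -ball_normE; exact: sub.
Qed.

Lemma measurable_borel_dR (A : set (borel_of dR)) :
  measurable A -> measurable (A : set R).
Proof.
apply: smallest_sub; first exact: sigma_algebra_measurable.
by move=> U /dopen_dR_open/open_measurable.
Qed.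

Lemma dopen_itvoo (a b : R) : dopen dR [set` `]a, b[].
Proof.
move=> y /=; rewrite in_itv /= => /andP[ay yb].
exists (Num.min (y - a) (b - y)); first by rewrite lt_min !subr_gt0 ay yb.
move=> z; rewrite /dball /dR /= lt_min in_itv /= !ltr_norml.
by case/andP=> /andP[? ?] /andP[? ?]; apply/andP; split; lra.
Qed.

Lemma measurable_borel_itvoo (a b : R) :
  measurable ([set` `]a, b[] : set (borel_of dR)).
Proof. by apply: sub_sigma_algebra; exact: dopen_itvoo. Qed.

Local Open Scope ereal_scope.

Definition lebesgue_dR (A : set (borel_of dR)) : \bar R := lebesgue_measure (A : set R).

Let lebesgue_dR0 : lebesgue_dR set0 = 0. Proof. exact: measure0. Qed.

Let lebesgue_dR_ge0 A : 0 <= lebesgue_dR A. Proof. exact: measure_ge0. Qed.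

Let lebesgue_dR_sigma_additive : semi_sigma_additive lebesgue_dR.
Proof.
move=> F mF tF mUF; apply: measure_semi_sigma_additive => //.
- by move=> i; exact: measurable_borel_dR.
- exact: measurable_borel_dR.
Qed.

HB.instance Definition _ := isMeasure.Build _ _ _ lebesgue_dR
  lebesgue_dR0 lebesgue_dR_ge0 lebesgue_dR_sigma_additive.

Variable c : {nonneg R}.
Local Notation nu := (mscale c lebesgue_dR).

Lemma mscale_lebesgue_dRE (A : set (borel_of dR)) :
  (nu : {measure set _ -> \bar R}) A = c%:num%:E * lebesgue_measure (A : set R).
Proof. by []. Qed.

Lemma mscale_lebesgue_dR_locally_finite : locally_finite nu.
Proof.
move=> x; exists 1%R => //.
rewrite mscale_lebesgue_dRE (_ : dball _ _ _ = ball x 1%R); last by rewrite -ball_normE.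
by rewrite lebesgue_measure_ball// -EFinM ltry.
Qed.

Lemma mscale_lebesgue_dR_assumptionA : assumptionA nu.
Proof.
move=> x A mA A0.
by rewrite mscale_lebesgue_dRE lebesgue_measure_dist_null ?mule0.
Qed.

Lemma mscale_lebesgue_dR_itvoo (a b : R) : (a <= b)%R ->
  (nu : {measure set _ -> \bar R}) [set` `]a, b[] = (c%:num * (b - a))%:E.
Proof.
move=> ab; rewrite mscale_lebesgue_dRE lebesgue_measure_itv /= lte_fin.
have [ab'|ba] := ltP a b; first by rewrite -EFinB -EFinM.
have -> : b = a by apply/eqP; rewrite eq_le ba ab.
by rewrite subrr mulr0 mule0.
Qed.

Lemma ball_volume_sup_mscale_lebesgue_dR (r : R) : (0 < r)%R ->
  ball_volume_sup nu r = (c%:num * (r *+ 2))%:E.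
Proof.
move=> r0.
have ball_vol x :
    (nu : {measure set _ -> \bar R}) (dcball dR x r) = (c%:num * (r *+ 2))%:E.
  rewrite mscale_lebesgue_dRE (_ : dcball _ _ _ = closed_ball x r); last first.
    by rewrite closed_ballE.
  by rewrite lebesgue_measure_closed_ball ?(ltW r0)// -EFinM.
rewrite /ball_volume_sup.
have -> : range (fun x => (nu : {measure set _ -> \bar R}) (dcball dR x r))
    = [set (c%:num * (r *+ 2))%:E].
  by apply/seteqP; split => [_ [x _ <-]|_ ->]; [|exists 0%R]; rewrite ?ball_vol.
exact: ereal_sup1.
Qed.

End real_line.

Section iterated_integral.
Variables (R : realType) (T : pointedType) (d : T -> T -> R).
Variables (nu : {measure set (borel_of d) -> \bar R}) (L : set T).
Local Open Scope ereal_scope.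

Lemma iter_integral_ge0 m (f : seq T -> \bar R) : (forall s, 0 <= f s) ->
  0 <= iter_integral nu L m f.
Proof.
elim: m f => [|m IH] f f0 /=; first exact: f0.
by apply: integral_ge0 => x _; exact: IH.
Qed.

Lemma eq_iter_integral m (f g : seq T -> \bar R) :
  (forall s, size s = m -> all (fun x => x \in L) s -> f s = g s) ->
  iter_integral nu L m f = iter_integral nu L m g.
Proof.
elim: m f g => [|m IH] f g fg /=; first exact: fg.
apply: eq_integral => x xL; apply: IH => s sm sL.
by apply: fg => /=; rewrite ?sm ?xL.
Qed.

End iterated_integral.

Section colouring.
Variables (R : realType) (T : pointedType) (d : T -> T -> R).
Variables (A B : set T).
Hypothesis AB0 : A `&` B = set0.

Definition colour (x : T) : nat :=
  if x \in A then 0 else if x \in B then 1 else 2.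

Lemma colourA x : A x -> colour x = 0%N.
Proof. by rewrite /colour => /mem_set ->. Qed.

Lemma colourB x : B x -> colour x = 1%N.
Proof.
move=> Bx; rewrite /colour (mem_set Bx) ifF//; apply/negbTE/negP => /set_mem Ax.
by have : (A `&` B) x by []; rewrite AB0.
Qed.

Lemma colour_lt2 x : (colour x < 2)%N = (x \in A `|` B).
Proof.
rewrite /colour in_setU; case: (x \in A) => //.
by case: (x \in B).
Qed.

Lemma colour_preimage (j : nat) :
  colour @^-1` [set j] = if j is 0 then A else if j is 1 then B `\` A
                         else if j is 2 then ~` (A `|` B) else set0.
Proof.
apply/seteqP; split => [x /=|].
  rewrite /colour; case: ifPn => [/set_mem Ax <-//|/negP nAx].
  case: ifPn => [/set_mem Bx <-|/negP nBx <-] /=; first by split=> // /mem_set.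
  by case=> /mem_set.
case: j => [|[|[|j]]] x //=; first exact: colourA.
  by case=> Bx _; exact: colourB.
move=> nABx; rewrite /colour !ifF//; apply/negbTE/negP => /set_mem ?; apply: nABx;
  by [left|right].
Qed.

Hypotheses (mA : measurable (A : set (borel_of d)))
  (mB : measurable (B : set (borel_of d))).

Lemma measurable_colour_preimage (j : nat) :
  measurable (colour @^-1` [set j] : set (borel_of d)).
Proof.
rewrite colour_preimage; case: j => [|[|[|j]]] //; first exact: measurableD.
by apply: measurableC; exact: measurableU.
Qed.

Lemma measurable_fun_colour d' (U : measurableType d') (g : nat -> U)
    (D : set (borel_of d)) :
  measurable_fun D (g \o colour).
Proof.
move=> mD Y mY; apply: measurableI => //.
rewrite (_ : _ @^-1` Y = \bigcup_(j in g @^-1` Y) colour @^-1` [set j]).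
  by apply: bigcup_measurable => j _; exact: measurable_colour_preimage.
by apply/seteqP; split => [x /= Yx|x [j Yj /= ->]]; first by exists (colour x).
Qed.

Variable nu : {measure set (borel_of d) -> \bar R}.
Variables a b : R.
Hypotheses (nuA : nu A = a%:E) (nuB : nu B = b%:E).
Local Open Scope ereal_scope.

Lemma integral_colour (G : nat -> \bar R) : (forall j, 0 <= G j) ->
  \int[nu]_(x in A `|` B) G (colour x) = G 0%N * a%:E + G 1%N * b%:E.
Proof.
move=> G0; rewrite ge0_integral_setU//; last 2 first.
- exact: (measurable_fun_colour G).
- exact/disj_set2P.
rewrite -nuA -nuB -!integral_cst//; congr (_ + _); apply: eq_integral => x /set_mem.
  by move/colourA ->.
by move/colourB ->.
Qed.

Definition colour_integral m (f : seq nat -> \bar R) : \bar R :=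
  iter_integral nu (A `|` B) m (fun s => f (map colour s)).

Lemma eq_colour_integral m (f g : seq nat -> \bar R) :
  (forall v, size v = m -> all (fun j => j < 2)%N v -> f v = g v) ->
  colour_integral m f = colour_integral m g.
Proof.
move=> fg; apply: eq_iter_integral => s sm sAB.
by apply: fg; rewrite ?size_map// all_map; under eq_all do rewrite /= colour_lt2.
Qed.

Lemma colour_integralS m f : (forall v, 0 <= f v) ->
  colour_integral m.+1 f = colour_integral m (fun v => f (0%N :: v)) * a%:E
                         + colour_integral m (fun v => f (1%N :: v)) * b%:E.
Proof.
move=> f0; rewrite /colour_integral /=.
pose G j := iter_integral nu (A `|` B) m (fun s => f (j :: map colour s)).
by rewrite (integral_colour (G := G))// => j; exact: iter_integral_ge0.
Qed.

Lemma colour_integral_cst m f (c : R) : (0 <= c)%R -> (forall v, 0 <= f v) ->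
  (forall v, size v = m -> all (fun j => j < 2)%N v -> f v = c%:E) ->
  colour_integral m f = (c * (a + b) ^+ m)%:E.
Proof.
move=> c0; elim: m f => [|m IH] f f0 fc; first by rewrite /colour_integral /= fc// mulr1.
rewrite colour_integralS// !IH.
- by rewrite -!EFinM -EFinD exprS; congr EFin; ring.
all: by [move=> v; exact: f0 | move=> v vm v2; apply: fc => /=; rewrite ?vm].
Qed.

Definition single_one (c : nat) (v : seq nat) : \bar R :=
  if (count (pred1 1%N) v + c == 1)%N then 1 else 0.

Lemma single_one_ge0 c v : 0 <= single_one c v.
Proof. by rewrite /single_one; case: ifP. Qed.

Lemma colour_integral_single_one_gt1 m c : (1 < c)%N ->
  colour_integral m (single_one c) = 0.
Proof.
move=> c1; rewrite (@colour_integral_cst _ _ 0%R) ?mul0r// => [v|v _ _].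
  exact: single_one_ge0.
by rewrite /single_one ifF//; apply/negbTE; rewrite neq_ltn orbC -addn1 ltn_addl.
Qed.

Lemma single_one_cons1 c : (fun v => single_one c (1%N :: v)) = single_one c.+1.
Proof. by apply/funext => v; rewrite /single_one /= add1n addSnnS. Qed.

Lemma colour_integral_single_one1 m : colour_integral m (single_one 1) = (a ^+ m)%:E.
Proof.
elim: m => [|m IH]; first by rewrite /colour_integral /= /single_one.
rewrite colour_integralS; last exact: single_one_ge0.
rewrite single_one_cons1 IH colour_integral_single_one_gt1//.
by rewrite mul0e adde0 -EFinM exprSr.
Qed.

Lemma colour_integral_single_one0 m :
  colour_integral m (single_one 0) = (m%:R * a ^+ m.-1 * b)%:E.
Proof.
elim: m => [|m IH]; first by rewrite /colour_integral /= /single_one /= !mul0r.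
rewrite colour_integralS; last exact: single_one_ge0.
rewrite single_one_cons1 IH colour_integral_single_one1.
rewrite -!EFinM -EFinD; congr EFin.
by case: m {IH} => [|m]; rewrite ?expr0 ?exprS -?[m.+2%:R]natr1 -?[m.+1%:R]natr1 /=; ring.
Qed.

End colouring.

Lemma potential_measurable_map (R : realType) (T : pointedType) (d : T -> T -> R)
    (chi : T -> nat) (h : seq nat -> \bar R) :
  (forall j, measurable (chi @^-1` [set j] : set (borel_of d))) ->
  potential_measurable d (fun s => h (map chi s)).
Proof.
move=> mchi m E mE.
pose F (v : m.-tuple nat) : set (m.-tuple (borel_of d)) :=
  [set t | E (h v) /\ forall i, chi (tnth t i) = tnth v i].
have -> : [set t : m.-tuple (borel_of d) | E (h (map chi t))] = \bigcup_v F v.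
  apply/seteqP; split => [t /= Et|t [v _ [Ev tv]] /=].
    by exists (map_tuple chi t) => //; split => // i; rewrite tnth_map.
  suff -> : map chi t = v by [].
  have -> : map chi t = map_tuple chi t by [].
  by congr val; apply: eq_from_tnth => i; rewrite tnth_map tv.
apply: (@countable_bigcupT_measurable _ (g_sigma_algebraType (@tuple_rect _ _ m)));
  first exact: countableP.
move=> v; have [Ev|nEv] := pselect (E (h v)).
  apply: sub_sigma_algebra; exists (fun i => chi @^-1` [set tnth v i]).
  by split => //; apply/seteqP; split => [t [_ tv] i|t tv]; [exact: tv|split].
by rewrite (_ : F v = set0); [exact: measurable0|apply/seteqP; split => t // []].
Qed.

Section hamiltonian.
Variables (R : realType) (T : pointedType) (phi : seq T -> \bar R).
Local Open Scope ereal_scope.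

Lemma hamiltonian_subseq_pinfty (q s : seq T) : potential_repulsive phi ->
  subseq q s -> (0 < size q)%N -> phi q = +oo -> hamiltonian phi s = +oo.
Proof.
move=> phi0 /subseqP[m ms ->] q0 phiq.
rewrite /hamiltonian (bigD1 (Tuple (introT eqP ms))) /=; last first.
  by rewrite has_count -(size_mask ms).
by rewrite phiq addye// gt_eqF// (lt_le_trans ltNy0)// sume_ge0.
Qed.

Variable k : nat.
Hypothesis phi_pure : potential_pure k phi.

Lemma hamiltonian_pure_lt s : (size s < k)%N -> hamiltonian phi s = 0.
Proof.
move=> sk; rewrite /hamiltonian big1// => b _; apply: phi_pure.
rewrite size_mask ?size_tuple// neq_ltn (leq_ltn_trans _ sk)//.
by rewrite -[leqRHS](size_tuple b) count_size.
Qed.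

Lemma hamiltonian_pure_eq s : (0 < k)%N -> size s = k -> hamiltonian phi s = phi s.
Proof.
move=> k0 sk; rewrite /hamiltonian (bigD1 [tuple of nseq (size s) true]) /=; last first.
  by rewrite has_nseq sk k0.
rewrite mask_true// big1 ?adde0// => b /andP[_ nb]; apply: phi_pure.
rewrite size_mask ?size_tuple//; apply: contra nb => /eqP cb; apply/eqP/val_inj => /=.
have /all_pred1P -> : all (pred1 true) b.
  by rewrite (@eq_all _ _ id) => [|[]]//; rewrite all_count cb size_tuple sk.
by rewrite size_tuple.
Qed.

End hamiltonian.

Lemma rem_count_neq1 (U : eqType) (P : pred U) (p : seq U) : (2 < size p)%N ->
  exists2 y, y \in p & count P (rem y p) != 1%N.
Proof.
move=> p2.
have count_rem y : y \in p -> count P (rem y p) = (count P p - P y)%N.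
  by move=> yp; move/permP: (perm_to_rem yp) => /(_ P) /= ->; rewrite addKn.
have [c1|c1] := eqVneq (count P p) 1%N.
  have /hasP[y yp Py] : has P p by rewrite has_count c1.
  by exists y; rewrite // count_rem // Py c1.
have [c2|c2] := eqVneq (count P p) 2%N.
  have /hasP[y yp /negbTE nPy] : has (predC P) p.
    by rewrite has_count -(ltn_add2l (count P p)) count_predC addn0 c2.
  by exists y; rewrite // count_rem // nPy c2.
case: p p2 count_rem c1 c2 => [//|y p'] _ count_rem c1 c2.
exists y; rewrite ?count_rem ?mem_head//.
by move: c1 c2 => /=; case: (P y) => /=; lia.
Qed.

Section colour_potential.
Context {R : realType} {T : pointedType} (A B : set T) (k : nat).
Local Notation colour := (colour A B).
Local Open Scope ereal_scope.

(* For odd [k] the truncated exponential [\sum_(i < k) (-2 t)^i / i!] has no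
   positive root; allowing the [k]-words with exactly one letter [1] adds the
   term [- t^k / (k-1)!], which makes the leading coefficient negative. *)
Definition forbidden_word (v : seq nat) : bool :=
  [&& size v == k, all (fun j => j < 2)%N v
    & ~~ (odd k && (count (pred1 1%N) v == 1%N))].

Definition colour_potential (s : seq T) : \bar R :=
  if forbidden_word (map colour s) then +oo else 0.

Definition boltzmann_word (v : seq nat) : \bar R :=
  if (size v < k)%N then 1 else if size v == k then (if forbidden_word v then 0 else 1)
  else 0.

Definition colour_Z_coeff (a b : R) (m : nat) : R :=
  (if (m < k)%N then (a + b) ^+ m
   else if m == k then (odd k)%:R * (k%:R * a ^+ k.-1 * b) else 0)%R.

Lemma colour_potential_symmetric : potential_symmetric colour_potential.
Proof.
move=> s s' /(perm_map colour) ss'; rewrite /colour_potential /forbidden_word.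
by rewrite (perm_size ss') (perm_all _ ss') (permP ss').
Qed.

Lemma colour_potential_repulsive : potential_repulsive colour_potential.
Proof. by move=> s; rewrite /colour_potential; case: ifP. Qed.

Lemma colour_potential_pure : potential_pure k colour_potential.
Proof. by move=> s sk; rewrite /colour_potential /forbidden_word size_map (negbTE sk). Qed.

Lemma colour_potential_range (d : T -> T -> R) (r : R) :
    (forall x y, (A `|` B) x -> (A `|` B) y -> (d x y <= r)%R) ->
  potential_range_le d r colour_potential.
Proof.
move=> dr s [x [y [xs ys rxy]]]; rewrite /colour_potential.
case: ifP => // /and3P[_ /allP s2 _]; move: rxy; rewrite ltNge dr//.
- by apply/set_mem; rewrite -colour_lt2; exact/s2/map_f.
- by apply/set_mem; rewrite -colour_lt2; exact/s2/map_f.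
Qed.

Hypothesis AB0 : A `&` B = set0.
Hypothesis k2 : (2 <= k)%N.

Lemma hamiltonian_colour_potential_gt s : (k < size s)%N ->
  all (fun x => x \in A `|` B) s -> hamiltonian colour_potential s = +oo.
Proof.
move=> ks sAB; pose p := take k.+1 s.
have pk : size p = k.+1 by rewrite size_takel.
have [y yp cy] := @rem_count_neq1 _ (fun x => colour x == 1%N) p ltac:(by rewrite pk).
apply: (@hamiltonian_subseq_pinfty _ _ _ (rem y p)).
- exact: colour_potential_repulsive.
- exact: subseq_trans (rem_subseq y p) (take_subseq s k.+1).
- by rewrite size_rem// pk /= ltnW.
rewrite /colour_potential /forbidden_word size_map size_rem// pk eqxx /=.
rewrite count_map (negbTE cy) andbF andbT all_map ifT//.
apply/allP => x /mem_rem /mem_take xs /=.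
by rewrite colour_lt2//; exact: (allP sAB).
Qed.

Lemma boltzmann_colour_potential s : all (fun x => x \in A `|` B) s ->
  expeR (- hamiltonian colour_potential s) = boltzmann_word (map colour s).
Proof.
move=> sAB; rewrite /boltzmann_word size_map.
case: ltngtP => sk.
- by rewrite (hamiltonian_pure_lt colour_potential_pure) ?oppe0 ?expeR0.
- by rewrite hamiltonian_colour_potential_gt.
rewrite (hamiltonian_pure_eq colour_potential_pure) ?(ltnW k2)//.
rewrite /colour_potential; case: ifP => _; last by rewrite oppe0 expeR0.
by apply/eqP; rewrite expeR_eq0.
Qed.

Variables (d : T -> T -> R) (nu : {measure set (borel_of d) -> \bar R}).
Hypotheses (mA : measurable (A : set (borel_of d)))
  (mB : measurable (B : set (borel_of d))).

Lemma colour_potential_measurable : potential_measurable d colour_potential.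
Proof.
exact: (@potential_measurable_map _ _ d colour
  (fun v => if forbidden_word v then +oo else 0) (measurable_colour_preimage AB0 mA mB)).
Qed.

Variables a b : R.
Hypotheses (nuA : nu A = a%:E) (nuB : nu B = b%:E).

Lemma Z_coeff_colour_potential m :
  Z_coeff nu colour_potential (A `|` B) m = (colour_Z_coeff a b m)%:E.
Proof.
have bw0 v : 0 <= boltzmann_word v by rewrite /boltzmann_word; repeat case: ifP.
have colour_cst := colour_integral_cst AB0 mA mB nuA nuB.
transitivity (colour_integral A B nu m boltzmann_word).
  by apply: eq_iter_integral => s _; exact: boltzmann_colour_potential.
rewrite /colour_Z_coeff; case: ltngtP => mk.
- rewrite (colour_cst _ _ 1%R) ?mul1r// => v vm _.
  by rewrite /boltzmann_word vm mk.
- rewrite (colour_cst _ _ 0%R) ?mul0r// => v vm _.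
  by rewrite /boltzmann_word vm ltnNge (ltnW mk) gtn_eqF.
subst m; case: (boolP (odd k)) => [ok|/negbTE ek].
  rewrite mul1r -(colour_integral_single_one0 AB0 mA mB nuA nuB).
  apply: eq_colour_integral => v vk v2.
  by rewrite /boltzmann_word /forbidden_word /single_one vk ltnn eqxx v2 ok addn0; case: eqP.
rewrite mul0r (colour_cst _ _ 0%R) ?mul0r// => v vk v2.
by rewrite /boltzmann_word /forbidden_word vk ltnn eqxx v2 ek.
Qed.

End colour_potential.

Lemma poly_pos_root (R : rcfType) (p : {poly R}) :
  0 < p.[0] -> lead_coef p < 0 -> exists2 t, 0 < t & root p t.
Proof.
move=> p0 lcp.
have [x0 x0p] := @poly_pinfty_gt_lc _ (- p) ltac:(by rewrite lead_coefN oppr_gt0).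
pose x := Num.max x0 1.
have px : 0 <= (- p).[x].
  apply: le_trans (ltW _) (x0p x _); last by rewrite le_max lexx.
  by rewrite lead_coefN oppr_gt0.
have x_ge0 : 0 <= x by rewrite le_max ler01 orbT.
have sgn : (- p).[0] <= 0 <= (- p).[x] by rewrite px andbT hornerN oppr_le0 ltW.
have [t /andP[t0 _] rt] := poly_ivt x_ge0 sgn.
exists t; last by rewrite -rootN.
by rewrite lt_neqAle t0 andbT; apply: contraTneq rt => <-; rewrite rootN /root gt_eqF.
Qed.

Section partition_polynomial.
Context {R : realType} (k : nat).
Hypothesis k2 : (2 <= k)%N.

Definition Zpoly_coef (i : nat) : R :=
  if (i < k)%N then (-2) ^+ i / i`!%:R else (odd k)%:R * (k%:R * (-1) ^+ k / k`!%:R).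

Lemma Zpoly_coef_root : exists2 t : R, 0 < t & \sum_(i < k.+1) Zpoly_coef i * t ^+ i = 0.
Proof.
pose p := \poly_(i < k + odd k) Zpoly_coef i.
have pE t : p.[t] = \sum_(i < k.+1) Zpoly_coef i * t ^+ i.
  rewrite horner_poly; case: (boolP (odd k)) => [|/negbTE ek]; first by rewrite addn1.
  by rewrite addn0 big_ord_recr /= /Zpoly_coef ltnn ek !mul0r addr0.
have k0 : (0 < k)%N by exact: leq_trans k2.
have top_neg : Zpoly_coef (k + odd k).-1 < 0.
  rewrite /Zpoly_coef; case: (boolP (odd k)) => [ok|/negbTE ek].
    rewrite addn1 /= ltnn mul1r -signr_odd ok expr1 mulrN1 mulNr oppr_lt0.
    by rewrite divr_gt0 ?ltr0n ?fact_gt0.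
  have ok1 : odd k.-1 by move: ek; case: (k) k0 => //= k' _ /negbFE.
  rewrite /= addn0 ltn_predL k0 exprNn -signr_odd ok1 expr1 mulN1r mulNr oppr_lt0.
  by rewrite divr_gt0 ?exprn_gt0 ?ltr0n ?fact_gt0.
have lcp : lead_coef p < 0 by rewrite lead_coef_poly ?addn_gt0 ?k0 ?lt_eqF.
have p0 : 0 < p.[0].
  rewrite pE big_ord_recl big1 ?addr0 => [|i _]; last by rewrite expr0n mulr0.
  by rewrite expr0 mulr1 /Zpoly_coef k0 expr0 mul1r invr_gt0 ltr0n fact_gt0.
have [t t0 /eqP rt] := poly_pos_root p0 lcp.
by exists t; rewrite // -pE.
Qed.

Lemma colour_Z_series (a t : R) (N : nat) : a != 0 -> (k < N)%N ->
  \sum_(m < N) (- (t / a)) ^+ m / m`!%:R * colour_Z_coeff k a a m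
  = \sum_(i < k.+1) Zpoly_coef i * t ^+ i.
Proof.
move=> a0 kN; rewrite -(subnKC kN) big_split_ord /= [X in _ + X]big1 ?addr0; last first.
  move=> i _; have ki : (k < k.+1 + i)%N by lia.
  by rewrite /colour_Z_coeff /= ltnNge (ltnW ki) gtn_eqF ?mulr0.
apply: eq_bigr => -[i /= ik] _; rewrite /colour_Z_coeff /Zpoly_coef.
have [ik'|ki|->] := ltngtP i k.
- have e : - (t / a) * (a + a) = -2 * t by field.
  by rewrite mulrAC -exprMn e exprMn mulrAC.
- by move: ik; rewrite ltnS leqNgt ki.
have e : (- (t / a)) ^+ k * (a ^+ k.-1 * a) = (-1) ^+ k * t ^+ k.
  rewrite -exprSr prednK ?(leq_trans _ k2)// -!exprMn.
  by congr (_ ^+ _); field.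
transitivity ((odd k)%:R * k%:R / k`!%:R * ((- (t / a)) ^+ k * (a ^+ k.-1 * a))).
  by ring.
by rewrite e; ring.
Qed.


End partition_polynomial.

Section partition_function_zero.
Variables (R : realType) (T : pointedType) (d : T -> T -> R).
Variables (nu : {measure set (borel_of d) -> \bar R}) (A B : set T) (k : nat).
Hypotheses (AB0 : A `&` B = set0) (k2 : (2 <= k)%N).
Hypotheses (mA : measurable (A : set (borel_of d)))
  (mB : measurable (B : set (borel_of d))).
Variables (a t : R).
Hypotheses (nuA : nu A = a%:E) (nuB : nu B = a%:E) (a0 : a != 0).
Hypothesis t_root : \sum_(i < k.+1) Zpoly_coef k i * t ^+ i = 0.

Lemma colour_potential_partition_function_zero :
  partition_function_zero nu (colour_potential A B k) (A `|` B) (- (t / a)).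
Proof.
have Zc := Z_coeff_colour_potential AB0 k2 mA mB nuA nuB.
split=> [m|]; first by rewrite Zc.
apply: cvg_near_cst; apply: filterS (nbhs_infty_ge k.+1) => N kN.
by under eq_bigr do rewrite Zc /=; rewrite colour_Z_series.
Qed.

End partition_function_zero.

Lemma inv_le_ln_div (R : realType) (x : R) : expR 1 <= x -> x^-1 <= ln x / x.
Proof.
move=> ex; have x0 : 0 < x := lt_le_trans (expR_gt0 1) ex.
rewrite -[leLHS]mul1r; apply: ler_wpM2r; first by rewrite invr_ge0 ltW.
by rewrite -(expRK 1) ler_ln ?posrE ?expR_gt0.
Qed.

Lemma near_inv_le_ln_div (R : realType) (u : R^nat) : u @ \oo --> +oo ->
  \forall n \near \oo, `|(u n)^-1| <= `|ln (u n) / u n|.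
Proof.
move/cvgryPge => /(_ (expR 1)); apply: filterS => n en.
have u0 : 0 < u n := lt_le_trans (expR_gt0 1) en.
by rewrite ger0_norm ?invr_ge0 ?(ltW u0)// (le_trans (inv_le_ln_div en)) ?ler_norm.
Qed.

Lemma natr_scale_cvgy (R : realType) (r : R) : 0 < r -> (n.+1)%:R * r @[n --> \oo] --> +oo.
Proof.
move=> r0; apply/cvgryPge => M.
move/cvgryPge : (@cvgr_idn R) => /(_ (M / r)); apply: filterS => n Mn.
by rewrite -ler_pdivrMr// (le_trans Mn)// ler_nat.
Qed.

Section cell_model.
Context {R : realType}.
Variables (w : R) (k : nat).
Local Notation A := [set` `](- w), 0[].
Local Notation B := [set` `]0, w[].
Local Notation phi := (colour_potential (R := R) A B k).
Implicit Types x y : R.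

Lemma itvoo_adjacent_disjoint (a b c : R) : [set` `]a, c[] `&` [set` `]c, b[] = set0.
Proof.
apply/seteqP; split => x // [] /=; rewrite !in_itv /= => /andP[_ xc] /andP[cx _].
by move: (lt_trans xc cx); rewrite ltxx.
Qed.

Lemma norm_lt_of_cells x : (A `|` B) x -> `|x| < w.
Proof. by case; rewrite /= in_itv /= ltr_norml => /andP[? ?]; apply/andP; split; lra. Qed.

Lemma dR_cells_le x y : (A `|` B) x -> (A `|` B) y -> dR x y <= w *+ 2.
Proof.
move=> /norm_lt_of_cells xw /norm_lt_of_cells yw.
by rewrite /dR (le_trans (ler_normB _ _))// mulr2n lerD// ltW.
Qed.

Lemma dbounded_cells : dbounded dR (A `|` B).
Proof. by exists 0, w => x /norm_lt_of_cells; rewrite /dball /dR /= sub0r normrN. Qed.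

Lemma measurable_cells : measurable (A `|` B : set (borel_of dR)).
Proof. by apply: measurableU; exact: measurable_borel_itvoo. Qed.

Lemma cells_colour_potential_admissible :
  [/\ potential_measurable dR phi, potential_symmetric phi, potential_repulsive phi,
      potential_range_le dR (w *+ 2) phi & potential_pure k phi].
Proof.
split.
- by apply: colour_potential_measurable; [exact: itvoo_adjacent_disjoint|
    exact: measurable_borel_itvoo|exact: measurable_borel_itvoo].
- exact: colour_potential_symmetric.
- exact: colour_potential_repulsive.
- by apply: colour_potential_range; exact: dR_cells_le.
- exact: colour_potential_pure.
Qed.

Hypotheses (w0 : 0 < w) (k2 : (2 <= k)%N).

Lemma cells_partition_function_zero (c : {nonneg R}) (t : R) : 0 < c%:num ->
  \sum_(i < k.+1) Zpoly_coef k i * t ^+ i = 0 ->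
  partition_function_zero (mscale c lebesgue_dR) phi (A `|` B)
    (- (t / (c%:num * w))).
Proof.
move=> c0 t_root; apply: colour_potential_partition_function_zero t_root => //.
- exact: itvoo_adjacent_disjoint.
- exact: measurable_borel_itvoo.
- exact: measurable_borel_itvoo.
- by rewrite mscale_lebesgue_dR_itvoo ?sub0r ?opprK// oppr_le0 ltW.
- by rewrite mscale_lebesgue_dR_itvoo ?subr0// ltW.
- by rewrite gt_eqF ?mulr_gt0.
Qed.

End cell_model.

Theorem mainTheorem10 (R : realType) (Rr : R) (k : nat) :
  0 < Rr -> (2 <= k)%N ->
  exists (X : nat -> pointedType) (d : forall n, X n -> X n -> R)
    (nu : forall n, {measure set (borel_of (d n)) -> \bar R})
    (phi : forall n, seq (X n) -> \bar R)
    (L : forall n, set (X n)) (lam : nat -> R),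
    (forall n,
      [/\ is_metric (d n), metric_complete (d n), metric_separable (d n),
          locally_finite (nu n) & assumptionA (nu n)] /\
        [/\ potential_measurable (d n) (phi n), potential_symmetric (phi n),
              potential_repulsive (phi n), potential_range_le (d n) Rr (phi n)
            & potential_pure k (phi n)]) /\
    (forall n, measurable (L n : set (borel_of (d n))) /\ dbounded (d n) (L n)) /\
    (forall n, 0 < lam n) /\
    (* (1) B_R^(n) -> +oo *)
    (ball_volume_sup (nu n) Rr @[n --> \oo] --> +oo%E) /\
    (* (2) lam_n = O(log B_R^(n) / B_R^(n)) *)
    (exists C : R, 0 < C /\
       \forall n \near \oo,
         ball_volume_sup (nu n) Rr \is a fin_num /\
         `|lam n| <= C * `| ln (fine (ball_volume_sup (nu n) Rr))
                            / fine (ball_volume_sup (nu n) Rr) |) /\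
    (* (3) Z_{L_n, phi_n}(-lam_n) = 0 *)
    (forall n, partition_function_zero (nu n) (phi n) (L n) (- lam n)).
Proof.
move=> Rr0 k2; have [t t0 t_root] := Zpoly_coef_root (R := R) k2.
pose w := Rr / 2; pose c n : {nonneg R} := NngNum (ler0n R n.+1).
pose a n := (n.+1)%:R * w; pose vol n := (n.+1)%:R * (Rr *+ 2).
have w0 : 0 < w by rewrite divr_gt0.
have lamE n : t / a n = 4 * t * (vol n)^-1.
  by rewrite /a /vol /w mulr2n; field; rewrite gt_eqF//= addrC natr1 pnatr_eq0.
have volE n : ball_volume_sup (mscale (c n) lebesgue_dR) Rr = (vol n)%:E.
  exact: ball_volume_sup_mscale_lebesgue_dR.
have vol_cvgy : vol n @[n --> \oo] --> +oo.
  by apply: natr_scale_cvgy; rewrite mulr2n addr_gt0.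
exists (fun=> R : pointedType), (fun=> dR), (fun n => mscale (c n) lebesgue_dR),
  (fun=> colour_potential [set` `](- w), 0[] [set` `]0, w[] k),
  (fun=> [set` `](- w), 0[] `|` [set` `]0, w[]), (fun n => t / a n).
split; [|split; [|split; [|split; [|split]]]].
- move=> n; split; last by rewrite -[Rr](divfK (_ : 2 != 0)) ?pnatr_eq0// mulr_natr;
    exact: cells_colour_potential_admissible.
  split; [exact: dR_metric|exact: dR_complete|exact: dR_separable
         |exact: mscale_lebesgue_dR_locally_finite|exact: mscale_lebesgue_dR_assumptionA].
- by move=> n; split; [exact: measurable_cells|exact: dbounded_cells].
- by move=> n; rewrite divr_gt0// mulr_gt0.
- by under eq_fun do rewrite volE; apply/cvgeryP.
- exists (4 * t); split; first by rewrite mulr_gt0.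
  apply: filterS (near_inv_le_ln_div vol_cvgy) => n vol_ln; rewrite volE; split=> //=.
  rewrite lamE normrM (ger0_norm (_ : 0 <= 4 * t)) ?mulr_ge0 ?(ltW t0)//.
  by apply: (ler_wpM2l _ vol_ln); rewrite mulr_ge0 ?(ltW t0).
- by move=> n; exact: cells_partition_function_zero.
Qed.
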